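(* Consider a market with $n$ buyers, $m$ items and $T$ time periods, where item $j$ has per-period supply $s_j^t\ge 0$ and overall supply $s_j\ge 0$. Every buyer has budget $B_i=1$ and binary valuations $v_{ij}\in\{0,1\}$, and buyer $i$ has per-period demands $d_i^t\ge0$ with $d_i=\sum_t d_i^t$. A feasible allocation is $x=(x_{ij}^t)\ge 0$ with $\sum_i x_{ij}^t\le s_j^t$ for all $j,t$ and $\sum_{t,i}x_{ij}^t\le s_j$ for all $j$; buyer $i$'s utility is $u_i(x_i)=\sum_j v_{ij}\sum_t x_{ij}^t-d_i$. Assume there is a feasible allocation with $u_i(x_i)>0$ for all $i$. Then the set of leximin-optimal feasible allocations coincides with the set of maximum Nash welfare allocations, i.e. the optimal solutions of $$\max_{x\ge 0}\sum_i\log\Big(\sum_j v_{ij}\sum_t x_{ij}^t-d_i\Big)\ \text{ over feasible allocations}.$$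
   Context: Leximin order: for $v,\tilde v\in\mathbb{R}^n$ with nondecreasing rearrangements $v^*,\tilde v^*$, $v$ is leximin-greater than $\tilde v$ if there is $k$ with $v^*_i=\tilde v^*_i$ for $i<k$ and $v^*_k>\tilde v^*_k$. A feasible allocation $x$ is leximin-optimal if no feasible $\tilde x$ has $(u_i(\tilde x_i))_i$ leximin-greater than $(u_i(x_i))_i$. *)

From HB Require Import structures.
From mathcomp Require Import all_boot all_order all_algebra.
From mathcomp Require Import all_classical all_reals.
From mathcomp Require Import exp.
Set Implicit Arguments. Unset Strict Implicit. Unset Printing Implicit Defensive.
Import Order.TTheory GRing.Theory Num.Theory.
Local Open Scope ring_scope.

Section Market.
Variable R : realType.
Variables (n m T : nat).

Definition alloc := 'I_n -> 'I_m -> 'I_T -> R.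

Definition feasible (s : 'I_m -> 'I_T -> R) (S : 'I_m -> R) (x : alloc) : Prop :=
  (forall i j t, 0 <= x i j t) /\
  (forall j t, \sum_(i < n) x i j t <= s j t) /\
  (forall j, \sum_(t < T) \sum_(i < n) x i j t <= S j).

Definition total_demand (d : 'I_n -> 'I_T -> R) (i : 'I_n) : R :=
  \sum_(t < T) d i t.

Definition utility (v : 'I_n -> 'I_m -> R) (d : 'I_n -> 'I_T -> R)
  (x : alloc) (i : 'I_n) : R :=
  \sum_(j < m) v i j * (\sum_(t < T) x i j t) - total_demand d i.

Definition sorted_vec (u : 'I_n -> R) : seq R :=
  sort <=%R [seq u i | i <- enum 'I_n].

Definition leximin_gt (u w : 'I_n -> R) : Prop :=
  exists k : 'I_n,
    (forall i : 'I_n, (i < k)%N -> nth 0 (sorted_vec u) i = nth 0 (sorted_vec w) i) /\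
    nth 0 (sorted_vec w) k < nth 0 (sorted_vec u) k.

Definition leximin_optimal s S v d (x : alloc) : Prop :=
  feasible s S x /\
  forall y : alloc, feasible s S y -> ~ leximin_gt (utility v d y) (utility v d x).

(* Maximum Nash welfare: maximizer of sum_i log u_i over feasible allocations,
   with log of a nonpositive number read as -oo (so a maximizer has all u_i > 0
   and only competitors with all u_i > 0 matter). *)
Definition max_nash_welfare s S v d (x : alloc) : Prop :=
  feasible s S x /\ (forall i, 0 < utility v d x i) /\
  forall y : alloc, feasible s S y -> (forall i, 0 < utility v d y i) ->
    \sum_(i < n) ln (utility v d y i) <= \sum_(i < n) ln (utility v d x i).

End Market.

From HB Require Import structures.
From mathcomp Require Import all_boot all_order all_algebra.
From mathcomp Require Import all_classical all_reals.
From mathcomp Require Import exp.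
From mathcomp Require Import ring lra.
Import Order.TTheory GRing.Theory Num.Theory.
Set Implicit Arguments.
Unset Strict Implicit.
Unset Printing Implicit Defensive.
Local Open Scope ring_scope.

(** Leximin-optimal and Nash-optimal allocations [x] are both characterized by
    one property: for every threshold [c], no feasible [y] gives the agents with
    [u_i(x) <= c] more total utility than [x] does.  If some [y] did, then, the
    valuations being binary, a small amount of some item could be moved to an
    agent [a] at or below the threshold, either from spare supply or from an
    agent who does not value it or lies above the threshold.  Such a move raises
    [a] and lowers at most one agent, who stays above [a]; it improves both the
    leximin order and the Nash product.  Conversely, this level domination rules
    out leximin improvements by counting sublevel sets, and gives Nash
    optimality through [ln r <= r - 1]: the resulting bound
    [sum_i (u_i(y) - u_i(x)) / u_i(x)] is, by Abel summation over the levels of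
    [1 / u_i(x)], a nonnegative combination of level sums, each [<= 0]. *)

Section Sublevel.
Variables (R : realDomainType) (I : finType).
Implicit Types f g : I -> R.

Definition sublevel f c : {set I} := [set i | f i <= c].

Definition level_dominates f g : Prop :=
  forall c, \sum_(i in sublevel f c) g i <= \sum_(i in sublevel f c) f i.

Lemma card_sublevel_le f c t : c <= t -> (#|sublevel f c| <= #|sublevel f t|)%N.
Proof.
move=> le_ct; apply/subset_leq_card/fintype.subsetP => i; rewrite !inE => fi_le.
exact: le_trans fi_le le_ct.
Qed.

(* Abel summation: [sum_i delta_i phi_i] is the integral over [t > 0] of the
   superlevel sums [sum_(phi_i >= t) delta_i]. *)
Lemma layer_cake_le0 (phi delta : I -> R) :
  (forall i, 0 <= phi i) -> (forall t, 0 < t -> \sum_(i | t <= phi i) delta i <= 0) ->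
  \sum_i delta i * phi i <= 0.
Proof.
have [k] := ubnP #|[set i | 0 < phi i]|.
elim: k phi => // k IH phi supp_lt phi_ge0 delta_le0.
have phi0 i : ~~ (0 < phi i) -> phi i = 0.
  by move=> phi_le0; apply/eqP; rewrite eq_le phi_ge0 leNgt phi_le0.
have [i0 i0_pos | no_pos] := pickP [pred i | 0 < phi i]; last first.
  by rewrite big1 // => i _; rewrite phi0 ?mulr0 //; exact: negbT (no_pos i).
set a := [arg min_(i < i0 | 0 < phi i) phi i]%O.
have [a_pos a_min] : 0 < phi a /\ forall i, 0 < phi i -> phi a <= phi i.
  by rewrite /a; case: arg_minP.
pose psi i := Num.max (phi i - phi a) 0.
have -> : \sum_i delta i * phi i =
    \sum_i delta i * psi i + phi a * \sum_(i | phi a <= phi i) delta i.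
  rewrite mulr_sumr [\sum_(i | phi a <= phi i) _]big_mkcond -big_split.
  apply: eq_bigr => i _ /=.
  have [le_ai | lt_ia] := leP (phi a) (phi i).
    by rewrite /psi max_l ?subr_ge0 //; ring.
  have phi_i0 : phi i = 0.
    by apply: phi0; apply: contraTN lt_ia => /a_min; rewrite -leNgt.
  by rewrite /psi phi_i0 max_r ?mulr0 ?addr0 // sub0r oppr_le0 ltW.
have psi_sum_le0 : \sum_i delta i * psi i <= 0.
  apply: IH => [|i|t t_pos].
  - have supp_psi : [set i | 0 < psi i] \subset [set i | 0 < phi i] :\ a.
      apply/fintype.subsetP => i; rewrite !inE /psi lt_max ltxx orbF subr_gt0 => lt_ai.
      by rewrite (lt_trans a_pos lt_ai) andbT; apply: contraTneq lt_ai => ->; rewrite ltxx.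
    apply: leq_ltn_trans (subset_leq_card supp_psi) _.
    by move: supp_lt; rewrite (cardsD1 a) inE a_pos add1n ltnS.
  - by rewrite /psi le_max lexx orbT.
  - rewrite (eq_bigl (fun i => t + phi a <= phi i)) => [|i].
      by apply: delta_le0; rewrite addr_gt0.
    by rewrite /psi le_max [t <= 0]leNgt t_pos orbF lerBrDr.
have: phi a * \sum_(i | phi a <= phi i) delta i <= 0 by rewrite pmulr_rle0 // delta_le0.
lra.
Qed.

Lemma sum_sublevel_gt f g c :
  (#|sublevel g c| < #|sublevel f c|)%N ->
  (forall t, t < c -> (#|sublevel g t| <= #|sublevel f t|)%N) ->
  exists t, \sum_(i in sublevel f t) f i < \sum_(i in sublevel f t) g i.
Proof.
move=> card_c card_below.
(* At the least [f]-value of an agent of [sublevel f c] that changes, nothing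
   below changes and, by [card_below], no agent goes down. *)
pose D := [set i in sublevel f c | g i != f i].
have [D0 | [i0 i0D]] := set_0Vmem D.
  suff /subset_leq_card : sublevel f c \subset sublevel g c by rewrite leqNgt card_c.
  apply/fintype.subsetP => i fic; have : i \notin D by rewrite D0 inE.
  by rewrite !inE in fic *; rewrite fic negbK => /eqP ->.
set a := [arg min_(i < i0 in D) f i]%O.
have [aD a_min] : a \in D /\ forall i, i \in D -> f a <= f i.
  by rewrite /a; case: arg_minP.
have [fa_le_c ga_ne] : f a <= c /\ g a != f a by move: aD; rewrite !inE => /andP[].
have same_below i : f i < f a -> g i = f i.
  move=> fi_lt; have fi_le_c := le_trans (ltW fi_lt) fa_le_c.
  apply/eqP; apply: contraTT fi_lt => gi_ne; rewrite -leNgt.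
  by apply: a_min; rewrite !inE gi_ne fi_le_c.
have raised i : f i = f a -> g i != f i -> f a < g i.
  move=> fi_eq gi_ne; rewrite ltNge; apply/negP => gi_le.
  have gi_lt : g i < f a by rewrite lt_neqAle gi_le andbT -fi_eq.
  have : (#|sublevel f (g i)| < #|sublevel g (g i)|)%N.
    have sub : i |: sublevel f (g i) \subset sublevel g (g i).
      apply/fintype.subsetP => j; rewrite !inE => /predU1P[-> // | fj_le].
      by rewrite same_below // (le_lt_trans fj_le gi_lt).
    apply: leq_trans (subset_leq_card sub).
    by rewrite cardsU1 inE -ltNge fi_eq gi_lt add1n.
  by rewrite ltnNge card_below // (lt_le_trans gi_lt fa_le_c).
exists (f a); rewrite (bigD1 a) ?inE //= [X in _ < X](bigD1 a) ?inE //=.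
apply: ltr_leD; first exact: raised.
apply: ler_sum => i /andP[]; rewrite inE => fi_le _.
have [fi_lt | fi_ge] := ltP (f i) (f a); first by rewrite same_below.
have fi_eq : f i = f a by apply/eqP; rewrite eq_le fi_le fi_ge.
have [-> // | gi_ne] := eqVneq (g i) (f i).
by rewrite fi_eq ltW // raised.
Qed.

Lemma level_dominates_gt0 f g :
  level_dominates f g -> (forall i, 0 < g i) -> forall i, 0 < f i.
Proof.
move=> dom g_gt0 a; rewrite ltNge; apply/negP => fa_le0.
have := dom (f a); apply/negP; rewrite -ltNge.
apply: (@le_lt_trans _ _ 0).
  rewrite -oppr_ge0 -sumrN; apply: sumr_ge0 => i; rewrite inE oppr_ge0 => fi_le.
  exact: le_trans fi_le fa_le0.
rewrite (bigD1 a) ?inE //=; apply: lt_le_trans (g_gt0 a) _.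
by rewrite lerDl; apply: sumr_ge0 => i _; apply: ltW.
Qed.

End Sublevel.

Section Leximin.
Variables (R : realType) (n : nat).
Implicit Types f g : 'I_n -> R.

Lemma card_sublevel f t : #|sublevel f t| = count (<= t) [seq f i | i <- enum 'I_n].
Proof. by rewrite count_map enumT cardsE cardE /enum_mem size_filter; apply: eq_count. Qed.

Lemma sorted_vec_gtE f t k : (k < n)%N ->
  (t < nth 0 (sorted_vec f) k) = (#|sublevel f t| <= k)%N.
Proof.
move=> lt_kn; have sorted_f : sorted <=%R (sorted_vec f).
  by apply: sort_sorted; exact: le_total.
have lt_k_size : (k < size (sorted_vec f))%N.
  by rewrite size_sort size_map size_enum_ord.
have <- : count (<= t) (sorted_vec f) = #|sublevel f t|.
  by rewrite count_sort card_sublevel.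
apply/idP/idP => [t_lt | card_le].
  by rewrite leqNgt; apply: contraTN t_lt => /(nth_count_le 0 sorted_f); rewrite -leNgt.
by apply: nth_count_gt; rewrite // card_le lt_k_size.
Qed.

Lemma eq_nth_sorted_vec f g k : (k < n)%N ->
  (forall t, (#|sublevel f t| <= k) = (#|sublevel g t| <= k))%N ->
  nth 0 (sorted_vec f) k = nth 0 (sorted_vec g) k.
Proof.
move=> lt_kn; suff le_nth f' g' :
    (forall t, (#|sublevel f' t| <= k) = (#|sublevel g' t| <= k))%N ->
    nth 0 (sorted_vec f') k <= nth 0 (sorted_vec g') k.
  by move=> card_eq; apply/eqP; rewrite eq_le !le_nth // => t; rewrite card_eq.
by move=> card_eq; rewrite leNgt sorted_vec_gtE // card_eq -sorted_vec_gtE // ltxx.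
Qed.

Lemma leximin_gt_of_sublevel f g c :
  (forall t, t < c -> #|sublevel g t| = #|sublevel f t|) ->
  (#|sublevel g c| < #|sublevel f c|)%N -> leximin_gt g f.
Proof.
move=> card_below card_c.
have lt_kn : (#|sublevel g c| < n)%N.
  by apply: (leq_trans card_c); rewrite -[X in (_ <= X)%N]card_ord max_card.
exists (Ordinal lt_kn); split => [i /= lt_ik | /=].
  apply: eq_nth_sorted_vec => [|t]; first exact: ltn_trans lt_ik lt_kn.
  have [/card_below -> // | le_ct] := ltP t c.
  have lt_i_g := leq_trans lt_ik (card_sublevel_le g le_ct).
  have lt_i_f := leq_trans (ltn_trans lt_ik card_c) (card_sublevel_le f le_ct).
  by rewrite leqNgt lt_i_g leqNgt lt_i_f.
apply: (@le_lt_trans _ _ c); last by rewrite sorted_vec_gtE.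
by rewrite leNgt sorted_vec_gtE // -ltnNge.
Qed.

Lemma leximin_gt_raise f g a : f a < g a ->
  (forall i, i != a -> g i = f i \/ f a < f i /\ f a < g i) -> leximin_gt g f.
Proof.
move=> raise others; apply: (@leximin_gt_of_sublevel _ _ (f a)).
  move=> t t_lt; apply: eq_card => i; rewrite !inE.
  have [-> | /others[-> // | [fa_lt_fi fa_lt_gi]]] := eqVneq i a.
    by rewrite !leNgt (lt_trans t_lt raise) t_lt.
  by rewrite !leNgt (lt_trans t_lt fa_lt_fi) (lt_trans t_lt fa_lt_gi).
apply: proper_card; rewrite properE; apply/andP; split.
  apply/fintype.subsetP => i; rewrite !inE.
  have [-> | /others[-> // | [_ fa_lt_gi]]] := eqVneq i a; first by rewrite lexx.
  by rewrite leNgt fa_lt_gi.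
by apply/fintype.subsetPn; exists a; rewrite !inE // -ltNge.
Qed.

Lemma leximin_gt_sublevel f g : leximin_gt g f ->
  exists c, (#|sublevel g c| < #|sublevel f c|)%N /\
    forall t, t < c -> (#|sublevel g t| <= #|sublevel f t|)%N.
Proof.
move=> [k [prefix lt_k]]; exists (nth 0 (sorted_vec f) k); split.
  apply: (@leq_ltn_trans k); first by rewrite -sorted_vec_gtE.
  by rewrite ltnNge -sorted_vec_gtE // ltxx.
move=> t t_lt; have le_pk : (#|sublevel f t| <= k)%N by rewrite -sorted_vec_gtE.
have [lt_pk | le_kp] := ltnP #|sublevel f t| k; last first.
  by apply: leq_trans le_kp; rewrite -sorted_vec_gtE // (lt_trans t_lt lt_k).
have lt_pn := ltn_trans lt_pk (ltn_ord k).
by rewrite -sorted_vec_gtE // (prefix (Ordinal lt_pn)) // sorted_vec_gtE.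
Qed.

Lemma not_leximin_gt_of_level_dominates f g : level_dominates f g -> ~ leximin_gt g f.
Proof.
move=> dom /leximin_gt_sublevel[c [card_c card_below]].
have [t] := sum_sublevel_gt card_c card_below.
by rewrite ltNge dom.
Qed.

End Leximin.

Lemma sum_ln_le_of_level_dominates (R : realType) (I : finType) (f g : I -> R) :
  (forall i, 0 < f i) -> (forall i, 0 < g i) -> level_dominates f g ->
  \sum_i ln (g i) <= \sum_i ln (f i).
Proof.
move=> f_gt0 g_gt0 dom; rewrite -subr_le0 -sumrB.
apply: (@le_trans _ _ (\sum_i (g i - f i) * (f i)^-1)).
  apply: ler_sum => i _; rewrite -ln_div ?posrE //.
  have -> : (g i - f i) * (f i)^-1 = g i / f i - 1 by rewrite mulrBl mulfV ?gt_eqF.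
  have := divr_gt0 (g_gt0 i) (f_gt0 i); set r := g i / f i => r_gt0.
  by rewrite -[in ln r](subrK 1 r) addrC le_ln1Dx //; lra.
apply: layer_cake_le0 => [i | t t_gt0]; first by rewrite invr_ge0 ltW.
have -> : \sum_(i | t <= (f i)^-1) (g i - f i) = \sum_(i in sublevel f t^-1) (g i - f i).
  by apply: eq_bigl => i; rewrite inE invf_pge ?posrE ?f_gt0.
by rewrite sumrB subr_le0 dom.
Qed.

Lemma sum_if_and_eq (R : nmodType) (I : finType) (b : bool) (i0 : I) (c : R) :
  \sum_i (if b && (i == i0) then c else 0) = if b then c else 0.
Proof. by case: b => /=; rewrite ?big1_eq // -big_mkcond big_pred1_eq. Qed.

Section Market.
Variables (R : realType) (n m T : nat).
Variables (s : 'I_m -> 'I_T -> R) (S : 'I_m -> R).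
Variables (v : 'I_n -> 'I_m -> R) (d : 'I_n -> 'I_T -> R).
Hypothesis v01 : forall i j, v i j = 0 \/ v i j = 1.

Local Notation alloc := (alloc R n m T).
Local Notation u := (utility v d).
Local Notation feas := (feasible s S).
Implicit Types (x y z : alloc) (L : {set 'I_n}).

Definition bump x c a j tau : alloc :=
  fun i j' t => x i j' t + if (i == a) && (j' == j) && (t == tau) then c else 0.

Lemma utility_bump x c a j tau i :
  u (bump x c a j tau) i = u x i + if i == a then c * v a j else 0.
Proof.
rewrite /utility /bump.
under eq_bigr => j' _ do rewrite big_split /= sum_if_and_eq mulrDr.
rewrite big_split /= addrAC; congr (_ + _).
have [-> | _] := eqVneq i a; last by rewrite big1 // => j' _; rewrite mulr0.
rewrite (bigD1 j) //= eqxx mulrC big1 ?addr0 // => j' /negbTE->.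
by rewrite mulr0.
Qed.

Lemma supply_bump x c a j tau j' t :
  \sum_i bump x c a j tau i j' t =
  \sum_i x i j' t + if (j' == j) && (t == tau) then c else 0.
Proof.
rewrite big_split /=; congr (_ + _).
under eq_bigr => i _ do rewrite -andbA andbC.
exact: sum_if_and_eq.
Qed.

Lemma total_supply_bump x c a j tau j' :
  \sum_t \sum_i bump x c a j tau i j' t =
  \sum_t \sum_i x i j' t + if j' == j then c else 0.
Proof.
under eq_bigr => t _ do rewrite supply_bump.
by rewrite big_split /= sum_if_and_eq.
Qed.

Lemma feasible_bump x a j tau eta : feas x -> 0 <= eta ->
  \sum_i x i j tau + eta <= s j tau ->
  \sum_t \sum_i x i j t + eta <= S j -> feas (bump x eta a j tau).
Proof.
move=> [x_ge0 [x_supply x_total]] eta_ge0 room_t room; split; [|split].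
- by move=> i j' t; rewrite /bump; case: ifP => _; rewrite ?addr0 ?addr_ge0.
- move=> j' t; rewrite supply_bump; case: ifP => [/andP[/eqP-> /eqP->] //|_].
  by rewrite addr0.
- move=> j'; rewrite total_supply_bump; case: eqP => [-> //|_].
  by rewrite addr0.
Qed.

Lemma feasible_transfer x a b j tau tau' eta : feas x -> 0 <= eta -> eta <= x b j tau' ->
  (tau' = tau \/ \sum_i x i j tau + eta <= s j tau) ->
  feas (bump (bump x eta a j tau) (- eta) b j tau').
Proof.
move=> [x_ge0 [x_supply x_total]] eta_ge0 eta_le room; split; [|split].
- move=> i j' t; rewrite /bump; have := x_ge0 i j' t.
  case: (eqVneq i b) => [-> | ] /=; last by case: (_ && _) => /=; lra.
  case: (eqVneq j' j) => [-> | ] /=; last by rewrite !andbF /=; lra.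
  case: (eqVneq t tau') => [-> | ] /=; last by case: (_ && _) => /=; lra.
  by case: (_ && _) => /=; lra.
- move=> j' t; rewrite !supply_bump; have := x_supply j' t.
  case: (eqVneq j' j) => [-> | ] /=; last lra.
  case: (eqVneq t tau) => [-> | _] /=.
    by case: room => [-> | ]; [rewrite eqxx; lra | case: (_ == _); lra].
  by case: (_ == _); lra.
- move=> j'; rewrite !total_supply_bump; have := x_total j'.
  by case: (eqVneq j' j) => [-> | ] /=; lra.
Qed.

Definition improvable x L : Prop :=
  exists a b (k : R), [/\ a \in L, 0 < k & forall eta, 0 < eta -> eta <= k ->
    exists z, [/\ feas z, u z a = u x a + eta &
      forall i, i != a -> u z i = u x i \/ [/\ i = b, i \notin L & u x i - eta <= u z i]]].

Lemma improvable_slack x L a j tau : feas x -> a \in L -> v a j = 1 ->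
  \sum_i x i j tau < s j tau -> \sum_t \sum_i x i j t < S j -> improvable x L.
Proof.
move=> Fx aL vaj slack_t slack.
exists a, a, (Num.min (s j tau - \sum_i x i j tau) (S j - \sum_t \sum_i x i j t)).
split => //; first by rewrite lt_min !subr_gt0 slack_t slack.
move=> eta eta_gt0; rewrite le_min => /andP[eta_le_t eta_le].
exists (bump x eta a j tau); split.
- by apply: feasible_bump => //; [exact: ltW | lra | lra].
- by rewrite utility_bump eqxx vaj mulr1.
- by move=> i ia; left; rewrite utility_bump (negbTE ia) addr0.
Qed.

Lemma improvable_transfer x L a b j tau tau' : feas x -> a \in L -> v a j = 1 ->
  0 < x b j tau' -> (tau' = tau \/ \sum_i x i j tau < s j tau) ->
  (b \notin L \/ v b j = 0) -> improvable x L.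
Proof.
move=> Fx aL vaj xb_gt0 room b_out.
have ab : a != b.
  apply/eqP => ab_eq; move: b_out; rewrite -ab_eq aL vaj => -[// | /eqP].
  by rewrite oner_eq0.
pose k := Num.min (x b j tau') (if tau' == tau then 1 else s j tau - \sum_i x i j tau).
exists a, b, k; split => //.
  rewrite lt_min xb_gt0 /=; case: eqP => [_ | tau_ne]; first exact: ltr01.
  by case: room => // slack; rewrite subr_gt0.
move=> eta eta_gt0; rewrite le_min => /andP[eta_le_x eta_le_room].
exists (bump (bump x eta a j tau) (- eta) b j tau'); split.
- apply: feasible_transfer => //; first exact: ltW.
  by move: eta_le_room; case: eqP => [-> | _]; [left | right; lra].
- by rewrite !utility_bump eqxx (negbTE ab) vaj; lra.
- move=> i ia; rewrite !utility_bump (negbTE ia) addr0.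
  have [-> | _] := eqVneq i b; last by left; rewrite addr0.
  case: (v01 b j) => vbj; first by left; rewrite vbj mulr0 addr0.
  right; split => //; last by rewrite vbj; lra.
  by case: b_out => // vbj0; move: vbj; rewrite vbj0 => /eqP; rewrite eq_sym oner_eq0.
Qed.

Lemma sum_utility x L :
  \sum_(i in L) u x i =
  \sum_j \sum_t \sum_(i in L) v i j * x i j t - \sum_(i in L) total_demand d i.
Proof.
rewrite /utility sumrB exchange_big /=; congr (_ - _); apply: eq_bigr => j _.
by under eq_bigr => i _ do rewrite mulr_sumr; rewrite exchange_big.
Qed.

Lemma valued_mass_le y L j t : feas y -> \sum_(i in L) v i j * y i j t <= \sum_i y i j t.
Proof.
move=> [y_ge0 _]; rewrite [X in _ <= X](bigID (mem L)) /= -[X in X <= _]addr0.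
apply: lerD; last by apply: sumr_ge0.
by apply: ler_sum => i _; case: (v01 i j) => ->; rewrite ?mul0r ?mul1r.
Qed.

Lemma valued_mass_eq x L j t : feas x ->
  (forall i, 0 < x i j t -> i \in L /\ v i j = 1) ->
  \sum_(i in L) v i j * x i j t = \sum_i x i j t.
Proof.
move=> [x_ge0 _] to_valuers.
rewrite [RHS](bigID (mem L)) /= [X in _ = _ + X]big1 ?addr0 => [|i iL].
  apply: eq_bigr => i _; have [/to_valuers[_ ->] | x_le0] := ltP 0 (x i j t).
    by rewrite mul1r.
  have -> : x i j t = 0 by apply/eqP; rewrite eq_le x_le0 x_ge0.
  by rewrite mulr0.
apply/eqP; rewrite eq_le x_ge0 andbT leNgt; apply: contra iL.
by case/to_valuers.
Qed.

Lemma mass_to_valuers x L a j tau t : feas x -> ~ improvable x L ->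
  a \in L -> v a j = 1 -> (t = tau \/ \sum_i x i j tau < s j tau) ->
  forall i, 0 < x i j t -> i \in L /\ v i j = 1.
Proof.
move=> Fx nimp aL vaj room i x_gt0.
have [iL | iL] := boolP (i \in L); last first.
  by exfalso; apply: nimp; apply: improvable_transfer Fx aL vaj x_gt0 room (or_introl iL).
case: (v01 i j) => // vij; exfalso; apply: nimp.
exact: improvable_transfer Fx aL vaj x_gt0 room (or_intror vij).
Qed.

Lemma valued_mass_sum_le x y L j : feas x -> feas y -> ~ improvable x L ->
  \sum_t \sum_(i in L) v i j * y i j t <= \sum_t \sum_(i in L) v i j * x i j t.
Proof.
move=> Fx Fy nimp.
have [/existsP[a /andP[aL /eqP vaj]] | no_valuer] :=
  boolP [exists a, (a \in L) && (v a j == 1)]; last first.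
  suff zero (w : alloc) : \sum_t \sum_(i in L) v i j * w i j t = 0 by rewrite !zero.
  apply: big1 => t _; apply: big1 => i iL; case: (v01 i j) => [-> | vij].
    by rewrite mul0r.
  by move/existsPn/(_ i): no_valuer; rewrite iL vij eqxx.
(* If some period of [j] has spare supply, [x] exhausts the overall supply of
   [j]; otherwise it exhausts every period.  Either way all of it goes to
   agents of [L] who value [j]. *)
have [/existsP[tau slack] | saturated] := boolP [exists tau, \sum_i x i j tau < s j tau].
  have full : S j <= \sum_t \sum_i x i j t.
    rewrite leNgt; apply/negP => slack_tot; apply: nimp.
    exact: improvable_slack Fx aL vaj slack slack_tot.
  rewrite [X in _ <= X](eq_bigr (fun t => \sum_i x i j t)) => [|t _]; last first.
    exact: valued_mass_eq Fx (mass_to_valuers Fx nimp aL vaj (or_intror slack)).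
  apply: le_trans full; apply: le_trans (proj2 (proj2 Fy) j).
  by apply: ler_sum => t _; apply: valued_mass_le.
apply: ler_sum => t _.
rewrite (valued_mass_eq Fx (mass_to_valuers Fx nimp aL vaj (or_introl erefl))).
apply: le_trans (valued_mass_le L j t Fy) (le_trans (proj1 (proj2 Fy) j t) _).
by move/existsPn/(_ t): saturated; rewrite -leNgt.
Qed.

Lemma improvable_of_sum_lt x y L : feas x -> feas y ->
  \sum_(i in L) u x i < \sum_(i in L) u y i -> improvable x L.
Proof.
move=> Fx Fy lt_sum; apply: contrapT => nimp; move: lt_sum; apply/negP.
rewrite -leNgt !sum_utility lerD2r; apply: ler_sum => j _.
exact: valued_mass_sum_le.
Qed.

Lemma sublevel_improvement x y c : feas x -> feas y ->
  \sum_(i in sublevel (u x) c) u x i < \sum_(i in sublevel (u x) c) u y i ->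
  exists a b eta z, [/\ feas z, 0 < eta, u z a = u x a + eta,
    forall i, i != a -> i != b -> u z i = u x i &
    b != a -> u x a + eta <= u x b - eta <= u z b].
Proof.
move=> Fx Fy lt_sum.
have [a [b [k [aL k_gt0 improve]]]] := improvable_of_sum_lt Fx Fy lt_sum.
have le_ac : u x a <= c by rewrite inE in aL.
(* [eta <= gap] keeps [b], if it loses, at or above [a]'s new utility. *)
pose gap := if b \in sublevel (u x) c then 1 else (u x b - u x a) / 2.
have gap_gt0 : 0 < gap.
  by rewrite /gap; case: ifP => // /negbT; rewrite inE -ltNge => lt_cb; lra.
pose eta := Num.min k gap.
have eta_gt0 : 0 < eta by rewrite lt_min k_gt0 gap_gt0.
have eta_le_k : eta <= k by rewrite ge_min lexx.
have [z [Fz za others]] := improve eta eta_gt0 eta_le_k.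
have [/existsP[i /andP[ia zi_ne]] | unchanged] :=
  boolP [exists i, (i != a) && (u z i != u x i)]; last first.
  exists a, a, eta, z; split => // [i ia _|]; last by rewrite eqxx.
  by apply/eqP; move/existsPn/(_ i): unchanged; rewrite ia negbK.
have [zi_eq | [ib bL zb_ge]] := others i ia; first by rewrite zi_eq eqxx in zi_ne.
subst i; exists a, b, eta, z; split => // [i ia' ib' | _].
  by case: (others i ia') => // -[ib'' _ _]; rewrite ib'' eqxx in ib'.
have : eta <= gap by rewrite ge_min lexx orbT.
by rewrite zb_ge andbT /gap (negbTE bL) => ?; lra.
Qed.

Lemma leximin_optimal_level_dominates x : leximin_optimal s S v d x ->
  forall y, feas y -> level_dominates (u x) (u y).
Proof.
move=> [Fx opt] y Fy c; rewrite leNgt; apply/negP => /(sublevel_improvement Fx Fy).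
move=> [a [b [eta [z [Fz eta_gt0 za others zb]]]]].
apply: (opt z Fz); apply: (@leximin_gt_raise _ _ _ _ a); first by rewrite za ltrDl.
move=> i ia; have [ib | ib] := eqVneq i b; last by left; exact: others.
by subst i; right; have /andP[] := zb ia; lra.
Qed.

Lemma max_nash_welfare_level_dominates x : max_nash_welfare s S v d x ->
  forall y, feas y -> level_dominates (u x) (u y).
Proof.
move=> [Fx [x_gt0 opt]] y Fy c; rewrite leNgt; apply/negP => /(sublevel_improvement Fx Fy).
move=> [a [b [eta [z [Fz eta_gt0 za others zb]]]]].
have xa_gt0 := x_gt0 a.
have z_gt0 i : 0 < u z i.
  have [-> | ia] := eqVneq i a; first by rewrite za addr_gt0.
  have [ib | ib] := eqVneq i b; last by rewrite others.
  by subst i; have /andP[] := zb ia; lra.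
have := opt z Fz z_gt0; apply/negP; rewrite -ltNge.
rewrite [X in _ < X](bigD1 a) // [X in X < _](bigD1 a) //=.
have [ba | ba] := eqVneq b a.
  rewrite [X in _ < _ + X](eq_bigr (fun i => ln (u x i))) => [|i ia]; last first.
    by rewrite others // ba.
  by rewrite ltrD2r ltr_ln ?posrE ?z_gt0 ?x_gt0 // za ltrDl.
rewrite [X in _ < _ + X](bigD1 b) // [X in _ + X < _](bigD1 b) //=.
rewrite [X in _ < _ + (_ + X)](eq_bigr (fun i => ln (u x i))) => [|i /andP[ia ib]];
  last by rewrite others.
rewrite !addrA ltrD2r -!lnM ?posrE ?z_gt0 ?x_gt0 //.
rewrite ltr_ln ?posrE ?mulr_gt0 ?z_gt0 ?x_gt0 // za.
have /andP[le_ab le_b] := zb ba.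
nra.
Qed.

End Market.

Theorem theorem4 (R : realType) (n m T : nat)
  (s : 'I_m -> 'I_T -> R) (S : 'I_m -> R)
  (v : 'I_n -> 'I_m -> R) (d : 'I_n -> 'I_T -> R)
  (hs : forall j t, 0 <= s j t) (hS : forall j, 0 <= S j)
  (hv : forall i j, v i j = 0 \/ v i j = 1)
  (hd : forall i t, 0 <= d i t)
  (hpos : exists x : alloc R n m T, feasible s S x /\ forall i, 0 < utility v d x i) :
  forall x : alloc R n m T,
    leximin_optimal s S v d x <-> max_nash_welfare s S v d x.
Proof.
move=> x; split => [lex | mnw].
  have dom := leximin_optimal_level_dominates hv lex.
  have [y0 [Fy0 y0_gt0]] := hpos.
  have x_gt0 := level_dominates_gt0 (dom y0 Fy0) y0_gt0.
  split; first by case: lex.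
  by split => // y Fy y_gt0; exact: sum_ln_le_of_level_dominates (dom y Fy).
split; first by case: mnw.
move=> y Fy.
exact: not_leximin_gt_of_level_dominates (max_nash_welfare_level_dominates hv mnw Fy).
Qed.
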